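(* Let $R_\bullet$ and $\omega_q,(\omega_q)_j$ be as in the context, and let $(\mu,\nu)$ be a $(p,q)$-shuffle. Then for $1\le j\le q$ one has $s_\mu(y_j)=y_{\nu_j+1}$ in $R_{p+q}$, and hence in $\Omega(R_{p+q})$ $$s_\mu(\omega_q)=\prod_{t\in\{\nu_1,\dots,\nu_q\}}{\bf d}y_{t+1},\qquad s_\mu((\omega_q)_j)=\prod_{t\in\{\nu_1,\dots,\widehat{\nu_j},\dots,\nu_q\}}{\bf d}y_{t+1}.$$
   Context: Fix $n\ge1$, $|x|\ge1$. $R_\bullet$ is the simplicial graded $\mathbb{F}_2$-algebra with $R_q=\mathbb{F}_2[x,y_1,\dots,y_q]$, $|y_i|=(n+1)|x|$, with algebra face and degeneracy maps $s_i(x)=x$, $d_i(x)=x$, $s_i(y_j)=y_j$ if $i\ge j$, $s_i(y_j)=y_{j+1}$ if $i<j$; $d_i(y_j)=x^{n+1}$ if $i=0,j=1$; $d_i(y_j)=y_{j-1}$ if $i<j,j>1$; $d_i(y_j)=y_j$ if $i\ge j,j<q$; $d_q(y_q)=0$. $\Omega$ denotes the de Rham complex functor (free $A$-algebra on ${\bf d}a$, $a\in A$, modulo additivity, Leibniz rule and $({\bf d}a)^2=0$), applied degreewise. $\omega_q={\bf d}y_1\cdots{\bf d}y_q$ and $(\omega_q)_j$ is $\omega_q$ with ${\bf d}y_j$ omitted. A $(p,q)$-shuffle $(\mu,\nu)$ consists of two increasing sequences $\mu_1<\dots<\mu_p$ and $\nu_1<\dots<\nu_q$ whose union is $\{0,1,\dots,p+q-1\}$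 (disjointly), and $s_\mu=s_{\mu_p}\cdots s_{\mu_1}:R_q\to R_{p+q}$ (extended to $\Omega$). *)

From HB Require Import structures.
From mathcomp Require Import all_boot all_algebra.
From mathcomp Require Import mpoly.
Set Implicit Arguments. Unset Strict Implicit. Unset Printing Implicit Defensive.
Import GRing.Theory.
Local Open Scope ring_scope.

(* R_q = F_2[x, y_1, ..., y_q]: variable 0 is x, variable j (1 <= j <= q) is y_j. *)
Definition R (q : nat) := {mpoly 'F_2[q.+1]}.

Definition xv (q : nat) : R q := 'X_(@ord0 q).
Definition yv (q : nat) (j : nat) : R q := 'X_(@inord q j).

Definition degen (i q : nat) (a : R q) : R q.+1 :=
  a \mPo [tuple (if (k : nat) == 0%N then xv q.+1
                 else if (k <= i)%N then yv q.+1 k else yv q.+1 k.+1) | k < q.+1].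

(* composite of degeneracies, applied in the order of the list: the head of
   the list is applied LAST.  smu_rev q [:: m_p; ...; m_1] = s_{m_p} o ... o s_{m_1} *)
Fixpoint smu_rev (q : nat) (l : seq nat) : R q -> R (size l + q)%N :=
  match l return R q -> R (size l + q)%N with
  | [::] => fun a => a
  | m :: l' => fun a => degen m (smu_rev l' a)
  end.

Definition smu (q : nat) (mu : seq nat) : R q -> R (size (rev mu) + q)%N :=
  @smu_rev q (rev mu).

Definition is_shuffle (p q : nat) (mu nu : seq nat) : Prop :=
  [/\ size mu = p, size nu = q, sorted ltn mu, sorted ltn nu
    & perm_eq (mu ++ nu) (iota 0 (p + q))].

(* De Rham complex of the polynomial ring R_q over F_2: an element is
   sum_S a_S dv_S, with S a set of variables and dv_S the product of the dv_k,
   k in S (char. 2: no signs; (dv)^2 = 0 gives the disjointness condition). *)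
Definition Omega (q : nat) := {ffun {set 'I_q.+1} -> R q}.

Definition omul (q : nat) (w1 w2 : Omega q) : Omega q :=
  [ffun U => \sum_(S : {set 'I_q.+1}) \sum_(T : {set 'I_q.+1} |
                 (S :&: T == set0) && (S :|: T == U)) w1 S * w2 T].

Definition oone (q : nat) : Omega q := [ffun U => (U == set0)%:R].

Definition oemb (q : nat) (a : R q) : Omega q :=
  [ffun U => if U == set0 then a else 0].

Definition oprod (q : nat) (l : seq (Omega q)) : Omega q := foldr (@omul q) (oone q) l.

Definition dR (q : nat) (a : R q) : Omega q :=
  [ffun U => \sum_(k : 'I_q.+1 | U == [set k]) a^`M(k)].

Definition Omap (q r : nat) (f : R q -> R r) (w : Omega q) : Omega r :=
  \sum_(S : {set 'I_q.+1})
     omul (oemb (f (w S))) (oprod [seq dR (f 'X_k) | k <- enum S]).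

Definition omega (q : nat) : Omega q := oprod [seq dR (yv q j) | j <- iota 1 q].
Definition omega_hat (q j : nat) : Omega q :=
  oprod [seq dR (yv q i) | i <- iota 1 q & i != j].

From mathcomp Require Import all_boot all_algebra.
From mathcomp Require Import mpoly.
From mathcomp Require Import zify.

Set Implicit Arguments.
Unset Strict Implicit.
Unset Printing Implicit Defensive.

(* A degeneracy s_i sends y_(d+1) to y_(bump i d + 1), so s_mu sends y_(d+1) to
   y_(r+1) with r = bump mu_p (... (bump mu_1 d)).  For increasing mu, r is not
   in mu and r = d + #{m in mu | m < r}; since mu and nu partition
   {0, ..., p+q-1}, r is then the element of nu with exactly d elements of nu
   below it, i.e. the (d+1)-st element of nu.
   On forms, a product of distinct dv_k taken in increasing order is a basis
   form dv_S, and Omega(s_mu) sends it to the product of the d(s_mu v_k) taken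
   in the same order. *)

Lemma count_ltn_sorted s x : sorted ltn s -> x \in s ->
  count (fun y => (y < x)%N) s = index x s.
Proof.
move=> sorted_s /splitPr s_eq; case: s_eq sorted_s => s1 s2.
rewrite (sorted_pairwise ltn_trans) pairwise_cat /=.
case/and4P=> /allrelP lt_s1 _ x_lt_s2 _.
have x_notin_s1 : x \notin s1.
  by apply/negP => /lt_s1 /(_ (mem_head x s2)); rewrite ltnn.
rewrite count_cat /= ltnn index_cat (negbTE x_notin_s1) /= eqxx add0n !addn0.
rewrite (@eq_in_count _ _ predT) ?count_predT; last by move=> y /lt_s1 -> //; rewrite mem_head.
rewrite (@eq_in_count _ _ pred0) ?count_pred0 ?addn0 //.
by move=> y /(allP x_lt_s2) /= /ltnW; rewrite ltnNge => ->.
Qed.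

Lemma count_ltn_iota0 k n : (k <= n)%N -> count (fun i => (i < k)%N) (iota 0 n) = k.
Proof. by move=> le_kn; rewrite -size_filter (filter_iota_ltn 0) ?size_iota. Qed.

Lemma map_nth_iota1 (T : Type) (x0 : T) (s : seq T) :
  [seq nth x0 s j.-1 | j <- iota 1 (size s)] = s.
Proof. by rewrite -[1%N]/(1 + 0)%N iotaDl -map_comp; exact: mkseq_nth. Qed.

Lemma filter_neq_nth (T : eqType) (x0 : T) (s : seq T) j : uniq s -> (1 <= j <= size s)%N ->
  [seq t <- s | t != nth x0 s j.-1] = [seq nth x0 s i.-1 | i <- iota 1 (size s) & i != j].
Proof.
move=> uniq_s j_range; rewrite -[s in filter _ s](map_nth_iota1 x0) filter_map.
congr map; apply: eq_in_filter => i; rewrite mem_iota => i_range /=.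
by rewrite nth_uniq //; lia.
Qed.

Definition bumps (mu : seq nat) (d : nat) : nat := foldl (fun d m => bump m d) d mu.

Lemma bump_leqS h i : (bump h i <= i.+1)%N.
Proof. by rewrite /bump; case: (h <= i)%N; rewrite ?add1n ?add0n. Qed.

Lemma foldr_bump_ltn (l : seq nat) d n : (d < n)%N -> (foldr bump d l < size l + n)%N.
Proof.
by move=> lt_d_n; elim: l => //= m l IHl; rewrite addSn ltnS (leq_trans (bump_leqS _ _)).
Qed.

Lemma bumps_notin_count mu d : sorted ltn mu ->
  bumps mu d \notin mu /\ bumps mu d = d + count (fun m => (m < bumps mu d)%N) mu.
Proof.
elim/last_ind: mu => [|mu m IHmu]; first by rewrite addn0.
rewrite (sorted_pairwise ltn_trans) pairwise_rcons -(sorted_pairwise ltn_trans).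
case/andP=> /allP lt_m /IHmu[notin_mu count_eq].
rewrite /bumps foldl_rcons -/(bumps mu d) mem_rcons inE -cats1 count_cat /= addn0.
set r := bumps mu d in notin_mu count_eq *.
have [lt_r_m | le_m_r] := ltnP r m.
  by rewrite /bump leqNgt lt_r_m add0n ltn_eqF // (negbTE notin_mu) ltnNge ltnW ?addn0.
have lt_mu y : y \in mu -> (y < r)%N by move=> /lt_m /= lt_y_m; exact: leq_trans lt_y_m le_m_r.
have all_lt t : (r <= t)%N -> count (fun y => (y < t)%N) mu = size mu.
  by move=> le_r_t; apply/eqP; rewrite -all_count; apply/allP => y /lt_mu /leq_trans; apply.
rewrite /bump le_m_r add1n ltnS le_m_r all_lt ?leqnSn //; rewrite all_lt // in count_eq.
split; last by rewrite count_eq addn1 addnS.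
by rewrite gtn_eqF ?ltnS //=; apply/negP => /lt_mu; rewrite ltnNge leqnSn.
Qed.

Lemma shuffle_bumps p q mu nu d : is_shuffle p q mu nu -> (d < q)%N ->
  bumps mu d = nth 0 nu d.
Proof.
case=> size_mu _ sorted_mu sorted_nu perm_shuffle lt_d_q.
have [notin_mu count_eq] := bumps_notin_count d sorted_mu.
set r := bumps mu d in notin_mu count_eq *.
have lt_r : (r < p + q)%N.
  by move: (count_size (fun m => (m < r)%N) mu); rewrite size_mu; lia.
have in_nu : r \in nu.
  by move: (mem_iota 0 (p + q) r); rewrite -(perm_mem perm_shuffle) mem_cat (negbTE notin_mu) lt_r.
have := count_ltn_iota0 (ltnW lt_r); rewrite -(permP perm_shuffle) count_cat.
rewrite (count_ltn_sorted sorted_nu in_nu) => count_split.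
have index_r : index r nu = d.
  by apply/eqP; rewrite -(eqn_add2l (count (fun m => m < r)%N mu)) count_split addnC -count_eq.
by rewrite -index_r nth_index.
Qed.

Import GRing.Theory.
Local Open Scope ring_scope.

Lemma degen_yv i n d : (d < n)%N -> degen i (yv n d.+1) = yv n.+1 (bump i d).+1.
Proof.
move=> lt_d_n; rewrite /degen /yv comp_mpolyXU -tnth_nth tnth_mktuple inordK //=.
by rewrite /bump; case: ltnP.
Qed.

Lemma smu_rev_yv q l d : (d < q)%N ->
  smu_rev l (yv q d.+1) = yv (size l + q) (foldr bump d l).+1.
Proof.
by move=> lt_d_q; elim: l => [|m l IHl] //=; rewrite IHl degen_yv // foldr_bump_ltn.
Qed.

Lemma smu_yv q mu d : (d < q)%N -> smu mu (yv q d.+1) = yv (size (rev mu) + q) (bumps mu d).+1.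
Proof. by move=> lt_d_q; rewrite /smu smu_rev_yv // /bumps -[in foldl _ _ mu](revK mu) foldl_rev. Qed.

Lemma smu_rev0 q l : smu_rev l (0 : R q) = 0.
Proof. by elim: l => [|m l IHl] //=; rewrite IHl /degen comp_mpoly0. Qed.

Lemma smu_rev1 q l : smu_rev l (1 : R q) = 1.
Proof. by elim: l => [|m l IHl] //=; rewrite IHl /degen comp_mpoly1. Qed.

Lemma mderivXU (K : nzRingType) n (k i : 'I_n) : ('X_k : {mpoly K[n]})^`M(i) = (k == i)%:R.
Proof.
rewrite mderivX mnm1E; case: eqP => [->|_]; last by rewrite scale0r.
by rewrite -[X in (X - _)%MM]add0m addmK mpolyX0 scale1r.
Qed.

Lemma oemb_omul n (a : R n) (w : Omega n) : omul (oemb a) w = [ffun U => a * w U].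
Proof.
apply/ffunP => U; rewrite !ffunE (bigD1 set0) //= [X in _ + X]big1 ?addr0; last first.
  by move=> S neq_S; apply: big1 => T _; rewrite ffunE (negbTE neq_S) mul0r.
rewrite (eq_bigl (pred1 U)) => [|T]; last by rewrite set0I set0U eqxx.
by rewrite big_pred1_eq ffunE eqxx.
Qed.

Section DeRham.

Variable q : nat.
Implicit Types (S U : {set 'I_q.+1}) (k : 'I_q.+1).

Definition dform S : Omega q := [ffun U => (U == S)%:R].

Lemma dR_X k : dR 'X_k = dform [set k].
Proof.
apply/ffunP => U; rewrite !ffunE (eq_bigr _ (fun i _ => mderivXU _ k i)).
have [->|neq_U] := eqVneq U [set k].
  by rewrite (big_pred1 k) ?eqxx // => i /=; apply/eqP/eqP => [/set1_inj|->].
by rewrite big1 // => i /eqP U_eq; case: eqP => // k_eq; rewrite U_eq k_eq eqxx in neq_U.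
Qed.

Lemma omul_dform1 k S : k \notin S -> omul (dform [set k]) (dform S) = dform (k |: S).
Proof.
move=> k_notin_S; apply/ffunP => U; rewrite !ffunE.
rewrite (bigD1 [set k]) //= [X in _ + X]big1 ?addr0; last first.
  by move=> S' neq_S'; apply: big1 => T _; rewrite ffunE (negbTE neq_S') mul0r.
rewrite big_mkcond (bigD1 S) //= [X in _ + X]big1 ?addr0; last first.
  by move=> T neq_T; rewrite !ffunE (negbTE neq_T) mulr0; case: ifP.
rewrite !ffunE !eqxx mulr1 setI_eq0 disjoints1 k_notin_S /= eq_sym.
by case: eqP.
Qed.

Lemma oprod_dR_X (s : seq 'I_q.+1) : uniq s -> oprod [seq dR 'X_k | k <- s] = dform [set:: s].
Proof.
elim: s => [_|k s IHs /= /andP[k_notin_s uniq_s]].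
  by rewrite set_nil; apply/ffunP => U; rewrite !ffunE.
by rewrite IHs // dR_X set_cons omul_dform1 // inE.
Qed.

Lemma Omap_dform r (f : R q -> R r) S : f 0 = 0 -> f 1 = 1 ->
  Omap f (dform S) = oprod [seq dR (f 'X_k) | k <- enum S].
Proof.
move=> f0 f1; rewrite /Omap (bigD1 S) //= [X in _ + X]big1 ?addr0; last first.
  move=> S' neq_S'; rewrite ffunE (negbTE neq_S') f0 oemb_omul.
  by apply/ffunP => U; rewrite !ffunE mul0r.
by rewrite ffunE eqxx f1 oemb_omul; apply/ffunP => U; rewrite !ffunE mul1r.
Qed.

Lemma enum_set_sorted (s : seq 'I_q.+1) : sorted ltn (map val s) -> enum [set:: s] = s.
Proof.
have lt_trans : transitive (relpre (val : 'I_q.+1 -> nat) ltn) by move=> a b c; exact: ltn_trans.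
rewrite sorted_map => sorted_s; apply: (irr_sorted_eq lt_trans) => // [a||x].
- exact: ltnn.
- rewrite /enum_mem -enumT (sorted_filter lt_trans) //.
  by rewrite -sorted_map val_enum_ord iota_ltn_sorted.
- by rewrite mem_enum inE.
Qed.

(* [Omap] expands [dform S] along [enum S], which lists S increasingly. *)
Lemma Omap_oprod_dR_X r (f : R q -> R r) (s : seq 'I_q.+1) :
  f 0 = 0 -> f 1 = 1 -> sorted ltn (map val s) ->
  Omap f (oprod [seq dR 'X_k | k <- s]) = oprod [seq dR (f 'X_k) | k <- s].
Proof.
move=> f0 f1 sorted_s.
have uniq_s : uniq s by rewrite -(map_inj_uniq val_inj) (sorted_uniq ltn_trans ltnn sorted_s).
by rewrite oprod_dR_X // Omap_dform // enum_set_sorted.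
Qed.

End DeRham.

Lemma smu_shuffle_yv p q mu nu j : is_shuffle p q mu nu -> (1 <= j <= q)%N ->
  smu mu (yv q j) = yv (size (rev mu) + q) (nth 0%N nu j.-1).+1.
Proof.
by case: j => [|d] // shuffle /andP[_ lt_d_q]; rewrite smu_yv // (shuffle_bumps shuffle).
Qed.

Lemma Omap_smu_oprod_dR_yv p q mu nu (l : seq nat) : is_shuffle p q mu nu ->
  sorted ltn l -> all (fun j => 1 <= j <= q)%N l ->
  Omap (@smu q mu) (oprod [seq dR (yv q j) | j <- l])
  = oprod [seq dR (yv (size (rev mu) + q) (nth 0%N nu j.-1).+1) | j <- l].
Proof.
move=> shuffle sorted_l /allP l_range.
set s := [seq inord j : 'I_q.+1 | j <- l].
have val_s : map val s = l.
  rewrite -map_comp -[RHS]map_id; apply/eq_in_map => j /l_range /andP[_ le_j_q] /=.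
  by rewrite inordK.
have -> : [seq dR (yv q j) | j <- l] = [seq dR 'X_k | k <- s] by rewrite -map_comp.
rewrite Omap_oprod_dR_X ?val_s //; [|exact: smu_rev0|exact: smu_rev1].
rewrite -map_comp; congr oprod; apply/eq_in_map => j /l_range j_range /=.
by rewrite -(smu_shuffle_yv shuffle j_range).
Qed.

Theorem lemma2p4 (p q : nat) (mu nu : seq nat) :
  is_shuffle p q mu nu ->
  (forall j : nat, (1 <= j <= q)%N ->
     smu mu (yv q j) = yv (size (rev mu) + q)%N (nth 0%N nu j.-1).+1) /\
  Omap (@smu q mu) (omega q)
    = oprod [seq dR (yv (size (rev mu) + q)%N t.+1) | t <- nu] /\
  (forall j : nat, (1 <= j <= q)%N ->
     Omap (@smu q mu) (omega_hat q j)
       = oprod [seq dR (yv (size (rev mu) + q)%N t.+1) | t <- nu & t != nth 0%N nu j.-1]).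
Proof.
move=> shuffle; have [_ size_nu _ sorted_nu _] := shuffle.
have uniq_nu : uniq nu := sorted_uniq ltn_trans ltnn sorted_nu.
have in_range : all (fun j => 1 <= j <= q)%N (iota 1 q).
  by apply/allP => j; rewrite mem_iota; lia.
split; first by move=> j; exact: smu_shuffle_yv shuffle.
split.
  rewrite /omega (Omap_smu_oprod_dR_yv shuffle (iota_ltn_sorted _ _) in_range).
  by rewrite -[in RHS](map_nth_iota1 0 nu) size_nu -map_comp.
move=> j j_range; rewrite /omega_hat (Omap_smu_oprod_dR_yv shuffle).
- by rewrite filter_neq_nth ?size_nu // -map_comp.
- exact/(sorted_filter ltn_trans)/iota_ltn_sorted.
- by rewrite all_filter; apply/allP => i /(allP in_range) /= ->; rewrite implybT.
Qed.
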